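(* Let $X$ be an infinite discrete space and $G$ a subgroup of the permutation group $\mathrm S(X)$ with the permutation topology $\tau_\partial$. The following conditions are equivalent: (1) the maximal equiuniformity $\mathcal U_X$ on $X$ (for the action $G\curvearrowright X$) is totally bounded; (2) the action of $G$ on $X$ is oligomorphic; (3) for every $n\in\mathbb N$ the maximal equiuniformity $\mathcal U_{X^n}$ on $X^n$ for the diagonal action $G\curvearrowright X^n$ is totally bounded. If one of the equivalent conditions (1)–(3) holds, then $G$ is Roelcke precompact.
   Context: $\tau_\partial$: the group topology on $G$ with neighbourhood base of the identity the pointwise stabilizers $\mathrm{St}_F=\{g\in G\mid g(x)=x\ \forall x\in F\}$, $F\subset X$ finite. For a discrete set $Y$ on which $G$ acts (here $Y=X$ or $Y=X^n$ with $g(y_1,\dots,y_n)=(gy_1,\dots,gy_n)$), the maximal equiuniformity $\mathcal U_Y$ has as base the partitions $\{\mathrm{St}_F\,y\mid y\in Y\}$ of $Y$ into orbits of $\mathrm{St}_F$, where $F$ ranges over finite subsets of $Y$ and $\mathrm{St}_F$ is the pointwise stabilizer of $F$ in $G$. The action is oligomorphic if for every $n\in\mathbb N$ the diagonal action $G\curvearrowright X^n$ has finitely many orbits. $G$ is Roelcke precompact if its Roelcke uniformity (greatest lower bound of left and right uniformities, base $\{UgU\mid g\in G\}$) is totally bounded. *)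

From Stdlib Require Import List.
From Stdlib Require Vectors.Fin.
Import ListNotations.
Set Implicit Arguments.

Definition infinite_type (X : Type) : Prop :=
  ~ exists l : list X, forall x, In x l.

Definition bijective {X : Type} (f : X -> X) : Prop :=
  exists h : X -> X, (forall x, h (f x) = x) /\ (forall x, f (h x) = x).

Definition is_perm_subgroup {X : Type} (G : (X -> X) -> Prop) : Prop :=
  (forall g, G g -> bijective g) /\
  G (fun x => x) /\
  (forall g h, G g -> G h -> G (fun x => g (h x))) /\
  (forall g, G g -> exists h, G h /\ (forall x, h (g x) = x) /\ (forall x, g (h x) = x)).

Definition St {X Y : Type} (G : (X -> X) -> Prop) (act : (X -> X) -> Y -> Y)
  (F : list Y) (g : X -> X) : Prop :=
  G g /\ forall y, In y F -> act g y = y.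

(* Base entourage of U_Y: the partition of Y into St_F-orbits. *)
Definition orbit_entourage {X Y : Type} (G : (X -> X) -> Prop)
  (act : (X -> X) -> Y -> Y) (F : list Y) (y y' : Y) : Prop :=
  exists g, St G act F g /\ y' = act g y.

Definition max_equiunif_entourage {X Y : Type} (G : (X -> X) -> Prop)
  (act : (X -> X) -> Y -> Y) (E : Y -> Y -> Prop) : Prop :=
  exists F : list Y, forall y y', orbit_entourage G act F y y' -> E y y'.

Definition totally_bounded_unif {Y : Type} (Ent : (Y -> Y -> Prop) -> Prop) : Prop :=
  forall E, Ent E -> exists A : list Y, forall y, exists a, In a A /\ E a y.

Definition max_equiunif_totally_bounded {X Y : Type} (G : (X -> X) -> Prop)
  (act : (X -> X) -> Y -> Y) : Prop :=
  totally_bounded_unif (max_equiunif_entourage G act).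

Definition act_X {X : Type} (g : X -> X) (x : X) : X := g x.
Definition act_Xn {X : Type} (n : nat) (g : X -> X) (v : Fin.t n -> X) : Fin.t n -> X :=
  fun i => g (v i).

Definition finitely_many_orbits {X Y : Type} (G : (X -> X) -> Prop)
  (act : (X -> X) -> Y -> Y) : Prop :=
  exists L : list Y, forall y, exists w g, In w L /\ G g /\ act g w = y.

Definition oligomorphic {X : Type} (G : (X -> X) -> Prop) : Prop :=
  forall n : nat, finitely_many_orbits G (@act_Xn X n).

Definition tau_nbhd_id {X : Type} (G : (X -> X) -> Prop) (U : (X -> X) -> Prop) : Prop :=
  (forall g, U g -> G g) /\
  exists F : list X, forall g, St G (@act_X X) F g -> U g.

Definition roelcke_entourage_of {X : Type} (U : (X -> X) -> Prop) (g h : X -> X) : Prop :=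
  exists u1 u2, U u1 /\ U u2 /\ forall x, h x = u1 (g (u2 x)).

Definition roelcke_precompact {X : Type} (G : (X -> X) -> Prop) : Prop :=
  forall U, tau_nbhd_id G U ->
    exists A : list (X -> X), (forall a, In a A -> G a) /\
      forall g, G g -> exists a, In a A /\ roelcke_entourage_of U a g.

(* Total boundedness of the maximal equiuniformity U_Y says exactly that every
   pointwise stabiliser St_F has finitely many orbits on Y.  If G is
   oligomorphic then so is every St_F, by induction on F: the St_(a::F)-orbits
   of n-tuples v are read off from the St_F-orbits of the (n+1)-tuples (a, v).
   Conversely, if every St_F has finitely many orbits on X, then G has finitely
   many orbits on (n+1)-tuples: extend each representative w of an orbit of
   n-tuples by representatives of the St_w-orbits on X.  Finally, if t
   enumerates F and a_1, ..., a_k are chosen along the finitely many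
   St_F-orbits of the tuples g t (g in G), every g lies in some St_F a_i St_F,
   which is Roelcke precompactness. *)
From Stdlib Require Import List.
From Stdlib Require Import Classical FunctionalExtensionality IndefiniteDescription.
Import ListNotations.

Lemma witness_list {A B : Type} (P : A -> B -> Prop) (L : list A) :
  exists C : list B, (forall c, In c C -> exists w, In w L /\ P w c) /\
    (forall w, In w L -> forall b, P w b -> exists c, In c C /\ P w c).
Proof.
  induction L as [|w L [C [HC HL]]].
  - exists []. split; intros; simpl in *; tauto.
  - destruct (classic (exists b, P w b)) as [[b Hb]|Hnone].
    + exists (b :: C). split.
      * intros c [<-|Hc]; [exists w; simpl; auto|].
        destruct (HC c Hc) as [w' [? ?]]. exists w'; simpl; auto.
      * intros w' [<-|Hw'] b' Hb'; [exists b; simpl; auto|].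
        destruct (HL w' Hw' b' Hb') as [c [? ?]]. exists c; simpl; auto.
    + exists C. split.
      * intros c Hc. destruct (HC c Hc) as [w' [? ?]]. exists w'; simpl; auto.
      * intros w' [<-|Hw'] b' Hb'; [exfalso; eauto|eauto].
Qed.

Definition tcons {X : Type} {n : nat} (x : X) (v : Fin.t n -> X) : Fin.t (S n) -> X :=
  fun i => Fin.caseS' i (fun _ => X) x v.

Definition ttail {X : Type} {n : nat} (v : Fin.t (S n) -> X) : Fin.t n -> X :=
  fun i => v (Fin.FS i).

Fixpoint fin_enum (n : nat) : list (Fin.t n) :=
  match n with 0 => [] | S m => Fin.F1 :: map Fin.FS (fin_enum m) end.

Lemma fin_enum_In (n : nat) (i : Fin.t n) : In i (fin_enum n).
Proof.
  induction n as [|n IH].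
  - exact (Fin.case0 (fun i => In i (fin_enum 0)) i).
  - pattern i. apply Fin.caseS'; [left; reflexivity|].
    intros j. right. apply in_map, IH.
Qed.

Definition tuple_entries {X : Type} {n : nat} (v : Fin.t n -> X) : list X :=
  map v (fin_enum n).

Lemma tuple_entries_In {X : Type} {n : nat} (v : Fin.t n -> X) (i : Fin.t n) :
  In (v i) (tuple_entries v).
Proof. apply in_map, fin_enum_In. Qed.

Fixpoint list_tuple {X : Type} (l : list X) : Fin.t (length l) -> X :=
  match l with
  | [] => fun i => Fin.case0 (fun _ => X) i
  | x :: l' => tcons x (list_tuple l')
  end.

Lemma list_tuple_surj {X : Type} (l : list X) (y : X) :
  In y l -> exists i, list_tuple l i = y.
Proof.
  induction l as [|x l IH]; simpl; [tauto|].
  intros [<-|Hy].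
  - exists Fin.F1. reflexivity.
  - destruct (IH Hy) as [i Hi]. exists (Fin.FS i). exact Hi.
Qed.

Lemma act_Xn_eq_apply {X : Type} {n : nat} {g : X -> X} {v w : Fin.t n -> X} (i : Fin.t n) :
  act_Xn g v = w -> g (v i) = w i.
Proof. intros <-. reflexivity. Qed.

Lemma max_equiunif_totally_bounded_iff {X Y : Type} (G : (X -> X) -> Prop)
    (act : (X -> X) -> Y -> Y) :
  max_equiunif_totally_bounded G act <->
  forall F, finitely_many_orbits (St G act F) act.
Proof.
  split.
  - intros Htb F. destruct (Htb (orbit_entourage G act F)) as [A HA].
    + exists F; auto.
    + exists A. intros y. destruct (HA y) as [a [Ha [g [Hg ->]]]]. eauto.
  - intros Horb E [F HF]. destruct (Horb F) as [L HL]. exists L. intros y.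
    destruct (HL y) as [w [g [Hw [Hg <-]]]]. exists w. split; auto.
    apply HF. exists g; auto.
Qed.

Lemma max_equiunif_tuples1_totally_bounded {X : Type} (G : (X -> X) -> Prop) :
  max_equiunif_totally_bounded G (@act_Xn X 1) ->
  max_equiunif_totally_bounded G (@act_X X).
Proof.
  rewrite !max_equiunif_totally_bounded_iff. intros Htb F.
  destruct (Htb (map (fun x (_ : Fin.t 1) => x) F)) as [L HL].
  exists (map (fun v => v Fin.F1) L). intros x.
  destruct (HL (fun _ => x)) as [w [g [Hw [[Gg Hg] Hgw]]]].
  exists (w Fin.F1), g. repeat split; auto.
  - apply (in_map (fun v => v Fin.F1)). exact Hw.
  - intros z Hz. apply (act_Xn_eq_apply Fin.F1 (Hg _ (in_map _ F z Hz))).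
  - exact (act_Xn_eq_apply Fin.F1 Hgw).
Qed.

Section PermutationGroup.

Context {X : Type} {G : (X -> X) -> Prop} (HG : is_perm_subgroup G).

Lemma G_comp {g h : X -> X} : G g -> G h -> G (fun x => g (h x)).
Proof. apply HG. Qed.

Lemma G_inv {g : X -> X} :
  G g -> exists h, G h /\ (forall x, h (g x) = x) /\ (forall x, g (h x) = x).
Proof. apply HG. Qed.

Lemma St_comp {F : list X} {g h : X -> X} :
  St G act_X F g -> St G act_X F h -> St G act_X F (fun x => g (h x)).
Proof.
  intros [Gg Hg] [Gh Hh]. split; [exact (G_comp Gg Gh)|].
  intros y Hy. unfold act_X in *. rewrite (Hh y Hy). exact (Hg y Hy).
Qed.

Lemma St_inv {F : list X} {g : X -> X} :
  St G act_X F g ->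
  exists h, St G act_X F h /\ (forall x, h (g x) = x) /\ (forall x, g (h x) = x).
Proof.
  intros [Gg Hg]. destruct (G_inv Gg) as [h [Gh [Hhg Hgh]]].
  exists h. repeat split; auto.
  intros y Hy. unfold act_X. rewrite <- (Hg y Hy) at 1. apply Hhg.
Qed.

Lemma St_nil (g : X -> X) : G g -> St G act_X [] g.
Proof. split; [auto|intros _ []]. Qed.

Lemma oligomorphic_stabilizer (Hol : oligomorphic G) (F : list X) (n : nat) :
  finitely_many_orbits (St G act_X F) (@act_Xn X n).
Proof.
  revert n. induction F as [|a F IH]; intros n.
  - destruct (Hol n) as [L HL]. exists L. intros y.
    destruct (HL y) as [w [g [Hw [Gg Hgw]]]]. exists w, g. auto using St_nil.
  - destruct (IH (S n)) as [L HL].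
    set (P := fun (w : Fin.t (S n) -> X) (c : Fin.t n -> X) =>
      exists g0, St G act_X F g0 /\ g0 (w Fin.F1) = a /\ c = ttail (act_Xn g0 w)).
    destruct (witness_list P L) as [C [_ HC]].
    exists C. intros y.
    destruct (HL (tcons a y)) as [w [g [Hw [Sg Hgw]]]].
    assert (Hga : g (w Fin.F1) = a) by exact (act_Xn_eq_apply Fin.F1 Hgw).
    destruct (HC w Hw y) as [c [Hc [g0 [Sg0 [Hg0a ->]]]]].
    { exists g. split; [exact Sg|split; [exact Hga|]]. rewrite Hgw. reflexivity. }
    destruct (St_inv Sg0) as [k [Sk [Hkg0 _]]].
    assert (Sgk := St_comp Sg Sk).
    exists (ttail (act_Xn g0 w)), (fun x => g (k x)). split; [exact Hc|split; [split|]].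
    + exact (proj1 Sgk).
    + intros z [<-|Hz].
      * unfold act_X. rewrite <- Hg0a at 1; rewrite Hkg0. exact Hga.
      * exact (proj2 Sgk z Hz).
    + apply functional_extensionality. intros i. unfold act_Xn, ttail.
      rewrite Hkg0. exact (act_Xn_eq_apply (Fin.FS i) Hgw).
Qed.

Lemma oligomorphic_max_equiunif_totally_bounded (Hol : oligomorphic G) (n : nat) :
  max_equiunif_totally_bounded G (@act_Xn X n).
Proof.
  apply max_equiunif_totally_bounded_iff. intros F.
  destruct (oligomorphic_stabilizer Hol (flat_map tuple_entries F) n) as [L HL].
  exists L. intros y. destruct (HL y) as [w [g [Hw [[Gg Hg] Hgw]]]].
  exists w, g. repeat split; auto.
  intros v Hv. apply functional_extensionality. intros i. apply Hg.
  apply in_flat_map. exists v. split; auto using tuple_entries_In.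
Qed.

Lemma max_equiunif_totally_bounded_oligomorphic :
  max_equiunif_totally_bounded G (@act_X X) -> oligomorphic G.
Proof.
  rewrite max_equiunif_totally_bounded_iff. intros Htb n. induction n as [|n IH].
  - set (v0 := fun i : Fin.t 0 => Fin.case0 (fun _ => X) i).
    exists [v0]. intros y. exists v0, (fun x => x). repeat split; [left; auto|apply HG|].
    apply functional_extensionality. intros i. exact (Fin.case0 (fun i => _ = y i) i).
  - destruct IH as [L HL].
    destruct (functional_choice (fun (w : Fin.t n -> X) (A : list X) =>
      forall x, exists a h, In a A /\ St G act_X (tuple_entries w) h /\ h a = x))
      as [reps Hreps].
    { intros w. exact (Htb (tuple_entries w)). }
    exists (flat_map (fun w => map (fun a => tcons a w) (reps w)) L).
    intros y. destruct (HL (ttail y)) as [w [g [Hw [Gg Hgw]]]].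
    destruct (G_inv Gg) as [k [_ [_ Hgk]]].
    destruct (Hreps w (k (y Fin.F1))) as [a [h [Ha [[Gh Hh] Hha]]]].
    exists (tcons a w), (fun x => g (h x)). repeat split.
    + apply in_flat_map. exists w. split; auto. apply (in_map (fun a => tcons a w)), Ha.
    + exact (G_comp Gg Gh).
    + apply functional_extensionality. intros i. pattern i. apply Fin.caseS'.
      * unfold act_Xn. simpl. rewrite Hha. apply Hgk.
      * intros j. unfold act_Xn. simpl. rewrite Hh by apply tuple_entries_In.
        exact (act_Xn_eq_apply j Hgw).
Qed.

Lemma oligomorphic_roelcke_precompact : oligomorphic G -> roelcke_precompact G.
Proof.
  intros Hol U [_ [F HF]].
  set (t := list_tuple F).
  destruct (oligomorphic_stabilizer Hol F (length F)) as [L HL].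
  set (P := fun (w : Fin.t (length F) -> X) (a : X -> X) =>
     G a /\ exists u, St G act_X F u /\ act_Xn u w = act_Xn a t).
  destruct (witness_list P L) as [C [HCsound HCcomplete]].
  exists C. split.
  { intros c Hc. destruct (HCsound c Hc) as [w [_ [? _]]]. auto. }
  intros g Gg.
  destruct (HL (act_Xn g t)) as [w [h [Hw [Sh Hhw]]]].
  destruct (HCcomplete w Hw g) as [a [Ha [Ga [u [Su Huw]]]]].
  { split; auto. exists h. auto. }
  exists a. split; auto.
  destruct (St_inv Su) as [ui [Sui [Huiu _]]].
  destruct (G_inv (proj1 Sh)) as [hi [Ghi [Hhih Hhhi]]].
  destruct (G_inv Ga) as [ai [Gai [Haia Haai]]].
  (* g = (h ui) a (ai u hi g), and both outer factors fix F pointwise *)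
  exists (fun x => h (ui x)), (fun x => ai (u (hi (g x)))). repeat split.
  - apply HF, St_comp; auto.
  - apply HF. split; [exact (G_comp Gai (G_comp (proj1 Su) (G_comp Ghi Gg)))|].
    intros y Hy. unfold act_X. destruct (list_tuple_surj F y Hy) as [i <-].
    assert (Hgt : g (t i) = h (w i)) by exact (eq_sym (act_Xn_eq_apply i Hhw)).
    assert (Huw_i : u (w i) = a (t i)) by exact (act_Xn_eq_apply i Huw).
    unfold t in *. rewrite Hgt, Hhih, Huw_i. apply Haia.
  - intros x. rewrite Haai, Huiu, Hhhi. reflexivity.
Qed.

End PermutationGroup.

Theorem theorem3p1 (X : Type) (G : (X -> X) -> Prop)
  (HX : infinite_type X) (HG : is_perm_subgroup G) :
  (max_equiunif_totally_bounded G (@act_X X) <-> oligomorphic G) /\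
  (oligomorphic G <->
     (forall n : nat, max_equiunif_totally_bounded G (@act_Xn X n))) /\
  ((max_equiunif_totally_bounded G (@act_X X) \/ oligomorphic G \/
    (forall n : nat, max_equiunif_totally_bounded G (@act_Xn X n))) ->
   roelcke_precompact G).
Proof.
  assert (tb1_olig := max_equiunif_totally_bounded_oligomorphic HG).
  assert (olig_tbn := oligomorphic_max_equiunif_totally_bounded HG).
  assert (tbn_tb1 := @max_equiunif_tuples1_totally_bounded X G).
  assert (olig_roelcke := oligomorphic_roelcke_precompact HG).
  split; [|split]; [split..|].
  - exact tb1_olig.
  - intros Hol. exact (tbn_tb1 (olig_tbn Hol 1)).
  - exact olig_tbn.
  - intros Htb. exact (tb1_olig (tbn_tb1 (Htb 1))).
  - intros Hany. apply olig_roelcke.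
    destruct Hany as [Htb|[Hol|Htb]];
      [exact (tb1_olig Htb)|exact Hol|exact (tb1_olig (tbn_tb1 (Htb 1)))].
Qed.
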